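(* Let $\mathcal X=\mathcal X_1\times\cdots\times\mathcal X_b$, $\mathcal X_i=\mathbb R^{m_i\times n_i}$ with trace inner product and arbitrary norms $\|\cdot\|_{(i)}$ (dual norms $\|\cdot\|_{(i)\star}$). Let $f:\mathcal X\to\mathbb R$ be continuously differentiable with $f\ge f^\star$. Let $\mathcal D$ be a probability distribution on subsets of $[b]$ and assume there are constants $L^0_{i,S},L^1_{i,S}\ge0$ ($S\in\operatorname{supp}(\mathcal D)$) such that for every $S\in\operatorname{supp}(\mathcal D)$, $X\in\mathcal X$ and $\Gamma$ with $\Gamma_i=0$ for $i\notin S$, $$f(X+\Gamma)-f(X)-\langle\nabla f(X),\Gamma\rangle\le\sum_{i\in S}\frac{L^0_{i,S}+L^1_{i,S}\|\nabla_if(X)\|_{(i)\star}}2\|\Gamma_i\|_{(i)}^2.$$ Fix $\varepsilon>0$. From $X^0$, for $k=0,1,\dots$ draw $S^k\sim\mathcal D$ i.i.d., set $X_i^{k+1}=X_i^k-\gamma_i^k(\nabla_if(X^k))^\sharp$ for $i\in S^k$ and $X_i^{k+1}=X_i^k$ otherwise, with $\gamma_i^k=(L^0_{i,S^k}+L^1_{i,S^k}\|\nabla_if(X^k)\|_{(i)\star})^{-1}$. Let $\hat S\sim\mathcal D$, $\delta^0=f(X^0)-f^\star$ and $w_i=\dfrac{\Pr(i\in\hat S)}{\mathbb E[L^1_{i,\hat S}\mid i\in\hat S]}$. Then to guarantee $$\min_{k=0,\dots,K-1}\sum_{i=1}^b\frac{w_i}{\frac1b\sum_{l=1}^bw_l}\mathbb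 E\big[\|\nabla_if(X^k)\|_{(i)\star}\big]\le\varepsilon,$$ it suffices to run the method for $$K=\left\lceil\frac{2\delta^0\sum_{i=1}^b\frac{\Pr(i\in\hat S)\,\mathbb E[L^0_{i,\hat S}\mid i\in\hat S]}{\left(\mathbb E[L^1_{i,\hat S}\mid i\in\hat S]\right)^2}}{\varepsilon^2\left(\frac1b\sum_{l=1}^bw_l\right)^2}+\frac{2\delta^0}{\varepsilon\left(\frac1b\sum_{l=1}^bw_l\right)}\right\rceil$$ iterations.
   Context: $\operatorname{supp}(\mathcal D)$ is the collection of subsets of $[b]$ with positive probability. For $G\in\mathcal X_i$, $G^\sharp$ is an element of $\arg\max_Z\{\langle G,Z\rangle-\frac12\|Z\|_{(i)}^2\}$. Expectations are over the random sets $S^k$. *)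

From HB Require Import structures.
From mathcomp Require Import all_boot all_order all_algebra.
From mathcomp Require Import boolp classical_sets reals.
Set Implicit Arguments. Unset Strict Implicit. Unset Printing Implicit Defensive.
Import Order.TTheory GRing.Theory Num.Theory.
Local Open Scope ring_scope.
Local Open Scope classical_set_scope.

Section BlockDefs.
Variable R : realType.

Definition tip (p q : nat) (A B : 'M[R]_(p, q)) : R := \tr (A^T *m B).

Definition is_norm (p q : nat) (N : 'M[R]_(p, q) -> R) : Prop :=
  [/\ forall x, 0 <= N x,
      forall x, N x = 0 -> x = 0,
      forall (a : R) x, N (a *: x) = `|a| * N x
    & forall x y, N (x + y) <= N x + N y].

Definition dualn (p q : nat) (N : 'M[R]_(p, q) -> R) (G : 'M[R]_(p, q)) : R :=
  sup [set tip G Z | Z in [set Z | N Z <= 1]].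

Variables (b : nat) (m n : 'I_b -> nat).

Definition pt := forall i : 'I_b, 'M[R]_(m i, n i).

Definition padd (X Y : pt) : pt := fun i => X i + Y i.
Definition psub (X Y : pt) : pt := fun i => X i - Y i.
Definition pip (X Y : pt) : R := \sum_(i < b) tip (X i) (Y i).
(* an auxiliary (l1 of entries) norm, used only to define differentiability
   and continuity; all norms on a finite-dimensional space are equivalent *)
Definition pl1 (X : pt) : R :=
  \sum_(i < b) \sum_(r < m i) \sum_(c < n i) `|X i r c|.

Definition is_C1_with_grad (f : pt -> R) (g : pt -> pt) : Prop :=
  (forall X (e : R), 0 < e -> exists2 d : R, 0 < d &
     forall H, pl1 H < d -> `|f (padd X H) - f X - pip (g X) H| <= e * pl1 H)
  /\
  (forall X (e : R), 0 < e -> exists2 d : R, 0 < d &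
     forall Y, pl1 (psub Y X) < d -> pl1 (psub (g Y) (g X)) < e).

Definition is_distr (D : {ffun {set 'I_b} -> R}) : Prop :=
  (forall S, 0 <= D S) /\ \sum_(S : {set 'I_b}) D S = 1.

Definition prob_in (D : {ffun {set 'I_b} -> R}) (i : 'I_b) : R :=
  \sum_(S : {set 'I_b} | i \in S) D S.
Definition cond_exp (D : {ffun {set 'I_b} -> R}) (L : 'I_b -> {set 'I_b} -> R)
    (i : 'I_b) : R :=
  (\sum_(S : {set 'I_b} | i \in S) D S * L i S) / prob_in D i.

Unset Implicit Arguments.
Variables (nrm : forall i : 'I_b, 'M[R]_(m i, n i) -> R)
          (sharp : forall i : 'I_b, 'M[R]_(m i, n i) -> 'M[R]_(m i, n i))
          (g : pt -> pt) (L0 L1 : 'I_b -> {set 'I_b} -> R).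
Set Implicit Arguments.

Definition step (S : {set 'I_b}) (X : pt) : pt := fun i =>
  if i \in S then
    X i - (L0 i S + L1 i S * dualn (nrm i) (g X i))^-1 *: sharp i (g X i)
  else X i.

Definition iterate (X0 : pt) (s : seq {set 'I_b}) : pt :=
  foldl (fun X S => step S X) X0 s.

(* E[ ||nabla_i f(X^k)||_(i)* ] over i.i.d. S^0, ..., S^{k-1} ~ D *)
Definition exp_gradnorm (D : {ffun {set 'I_b} -> R}) (X0 : pt) (k : nat)
    (i : 'I_b) : R :=
  \sum_(t : k.-tuple {set 'I_b})
     (\prod_(S <- t) D S) * dualn (nrm i) (g (iterate X0 t) i).

End BlockDefs.

From HB Require Import structures.
From mathcomp Require Import all_boot all_order all_algebra.
From mathcomp Require Import boolp classical_sets reals.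
From mathcomp Require Import ring lra.
Set Implicit Arguments.
Unset Strict Implicit.
Unset Printing Implicit Defensive.

Import Order.TTheory GRing.Theory Num.Theory.
Local Open Scope ring_scope.

(** For each block, maximality of the sharp operator gives
    ‖G‖⋆²/2 ≤ ⟨G, G♯⟩ − ‖G♯‖²/2, so the (L0, L1)-smoothness bound yields, for
    any weights s_i, the one-step descent
      f(X⁺) ≤ f(X) − Σ_{i∈S} (s_i ‖∇_i f(X)‖⋆ − s_i² ℓ_{i,S}(X) / 2),
    where ℓ_{i,S}(X) = L0_{i,S} + L1_{i,S} ‖∇_i f(X)‖⋆. Averaging over S ~ D
    with s_i = θ / E[L1 | i ∈ Ŝ] gives
      E f(X^{k+1}) ≤ E f(X^k) − θ (1 − θ/2) Σ_i w_i E‖∇_i f(X^k)‖⋆ + θ²/2 · A,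
    with A = Σ_i Pr(i ∈ Ŝ) E[L0 | i ∈ Ŝ] / E[L1 | i ∈ Ŝ]². Telescoping and
    f ≥ f⋆ bound the sum of these decreases over k < K by δ⁰, and
    θ = u / (u + A) with u = ε·w̄ turns this into the stated iteration count. *)

Lemma tipZr (R : realType) p q (G Z : 'M[R]_(p, q)) a :
  tip G (a *: Z) = a * tip G Z.
Proof. by rewrite /tip -scalemxAr mxtraceZ. Qed.

Lemma tip0r (R : realType) p q (G : 'M[R]_(p, q)) : tip G 0 = 0.
Proof. by rewrite /tip mulmx0 mxtrace0. Qed.

Lemma is_norm0 (R : realType) p q (N : 'M[R]_(p, q) -> R) : is_norm N -> N 0 = 0.
Proof. by case=> _ _ NZ _; rewrite -(scale0r 0) NZ normr0 mul0r. Qed.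

Section DualNorm.
Local Open Scope classical_set_scope.
Variables (R : realType) (p q : nat) (N : 'M[R]_(p, q) -> R) (G Gs : 'M[R]_(p, q)).
Hypotheses (N_norm : is_norm N)
  (Gs_max : forall Z, tip G Z - N Z ^+ 2 / 2 <= tip G Gs - N Gs ^+ 2 / 2).

Local Notation v := (tip G Gs - N Gs ^+ 2 / 2).
Local Notation pairings := [set tip G Z | Z in [set Z | N Z <= 1]].

Lemma scaled_pairing_le t a : pairings a -> 0 <= t -> t * a - t ^+ 2 / 2 <= v.
Proof.
case: N_norm => N_ge0 _ NZ _ [Z /= NZ1 <-] t_ge0.
apply: le_trans (Gs_max (t *: Z)); rewrite tipZr NZ ger0_norm // exprMn.
have : t ^+ 2 * N Z ^+ 2 <= t ^+ 2 by rewrite ler_piMr ?sqr_ge0 ?expr_le1.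
lra.
Qed.

Lemma pairings0 : pairings 0.
Proof. by exists 0; rewrite /= ?tip0r // is_norm0 ?ler01. Qed.

Lemma pairings_ub : has_ubound pairings.
Proof.
exists (v + 1 / 2) => a Ea.
by have := scaled_pairing_le Ea ler01; rewrite mul1r expr1n; lra.
Qed.

Lemma dualn_ge0 : 0 <= dualn N G.
Proof. exact: (ub_le_sup pairings_ub pairings0). Qed.

Lemma dualn_sqr_le : dualn N G ^+ 2 / 2 <= v.
Proof.
have v_ge0 : 0 <= v.
  have := scaled_pairing_le pairings0 (lexx (0 : R)).
  by rewrite mulr0 expr0n /= mul0r subr0.
have [d0|d_gt0] := eqVneq (dualn N G) 0; first by rewrite d0 expr0n /= mul0r.
have {}d_gt0 : 0 < dualn N G by rewrite lt_def d_gt0 dualn_ge0.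
have : dualn N G <= (v + dualn N G ^+ 2 / 2) / dualn N G.
  apply: ge_sup; first by exists 0; exact: pairings0.
  move=> a Ea; have := scaled_pairing_le Ea (ltW d_gt0).
  by rewrite ler_pdivlMr //; nra.
rewrite ler_pdivlMr //; nra.
Qed.

End DualNorm.

Lemma sum_tuple_cons (R : nmodType) (T : finType) k (F : k.+1.-tuple T -> R) :
  \sum_(t : k.+1.-tuple T) F t = \sum_(x : T) \sum_(t : k.-tuple T) F [tuple of x :: t].
Proof.
rewrite pair_big /=.
rewrite (reindex (fun p : T * k.-tuple T => [tuple of p.1 :: p.2])) //=.
exists (fun t => (thead t, behead_tuple t)) => [[x t] _ | t _] /=.
  by rewrite theadE; congr pair; apply: val_inj.
by rewrite [RHS]tuple_eta.
Qed.

Section IteratedExpectation.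
Variables (R : realDomainType) (T : finType) (A : Type).
Variables (D : {ffun T -> R}) (tr : T -> A -> A).

Definition expect_iter k (x : A) (F : A -> R) : R :=
  \sum_(t : k.-tuple T) (\prod_(S <- t) D S) * F (foldl (fun y S => tr S y) x t).

Lemma expect_iter0 x F : expect_iter 0 x F = F x.
Proof.
rewrite /expect_iter (eq_bigr (fun _ => F x)) => [|t _]; last first.
  by rewrite tuple0 big_nil mul1r.
by rewrite sumr_const card_tuple expn0.
Qed.

Lemma expect_iterS k x F :
  expect_iter k.+1 x F = \sum_S D S * expect_iter k (tr S x) F.
Proof.
rewrite /expect_iter sum_tuple_cons; apply: eq_bigr => S _; rewrite mulr_sumr.
by apply: eq_bigr => t _; rewrite /= big_cons mulrA.
Qed.

Lemma expect_iterB k x F G :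
  expect_iter k x (fun y => F y - G y) = expect_iter k x F - expect_iter k x G.
Proof. by rewrite /expect_iter -sumrB; apply: eq_bigr => t _; rewrite mulrBr. Qed.

Lemma expect_iterZ k x F a :
  expect_iter k x (fun y => a * F y) = a * expect_iter k x F.
Proof. by rewrite /expect_iter mulr_sumr; apply: eq_bigr => t _; rewrite mulrCA. Qed.

Lemma expect_iter_sum (I : finType) k x (F : I -> A -> R) :
  expect_iter k x (fun y => \sum_i F i y) = \sum_i expect_iter k x (F i).
Proof.
by rewrite /expect_iter exchange_big; apply: eq_bigr => t _; rewrite mulr_sumr.
Qed.

Hypotheses (D_ge0 : forall S, 0 <= D S) (D_sum1 : \sum_S D S = 1).

Lemma expect_iter_cst k x c : expect_iter k x (fun _ => c) = c.
Proof.
elim: k x => [|k IHk] x; first by rewrite expect_iter0.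
rewrite expect_iterS; under eq_bigr do rewrite IHk.
by rewrite -mulr_suml D_sum1 mul1r.
Qed.

Lemma ler_expect_iter k x F G :
  (forall y, F y <= G y) -> expect_iter k x F <= expect_iter k x G.
Proof.
move=> FG; apply: ler_sum => t _; apply: ler_wpM2l => //.
exact: prodr_ge0.
Qed.

Lemma expect_iterS_le F G :
  (forall y, \sum_S D S * F (tr S y) <= G y) ->
  forall k x, expect_iter k.+1 x F <= expect_iter k x G.
Proof.
move=> FG; elim=> [|k IHk] x.
  rewrite expect_iterS expect_iter0; apply: le_trans (FG x).
  by apply: ler_sum => S _; rewrite expect_iter0.
rewrite expect_iterS [leRHS]expect_iterS.
by apply: ler_sum => S _; apply: ler_wpM2l.
Qed.

Lemma expect_iter_telescope F h K x :
  (forall y, \sum_S D S * F (tr S y) <= F y - h y) ->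
  \sum_(k < K) expect_iter k x h <= F x - expect_iter K x F.
Proof.
move=> Fh; elim: K => [|K IHK]; first by rewrite big_ord0 expect_iter0 subrr.
have := expect_iterS_le Fh K x; rewrite expect_iterB big_ord_recr /=.
lra.
Qed.

End IteratedExpectation.

Lemma exists_le_of_sum_le (R : realDomainType) K (a : 'I_K -> R) (c C : R) :
  (0 < K)%N -> \sum_(k < K) a k <= C -> C <= K%:R * c -> exists k, a k <= c.
Proof.
move=> K_gt0 sum_le C_le; apply/existsP; apply: contraT.
rewrite negb_exists => /forallP a_gt.
have : \sum_(k < K) c < \sum_(k < K) a k.
  apply: ltr_sum => [|k _]; last by rewrite ltNge a_gt.
  by apply/hasP; exists (Ordinal K_gt0); rewrite ?mem_index_enum.
rewrite sumr_const card_ord -mulr_natl; lra.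
Qed.

Lemma inv_curv_step_le (R : realFieldType) (l d T N s : R) :
  0 < l -> d ^+ 2 / 2 <= T - N ^+ 2 / 2 ->
  - l^-1 * T + l / 2 * (- l^-1) ^+ 2 * N ^+ 2 <= - (s * d - s ^+ 2 * l / 2).
Proof.
move=> l_gt0 dT.
have l_neq0 : l != 0 by rewrite gt_eqF.
have -> : - l^-1 * T + l / 2 * (- l^-1) ^+ 2 * N ^+ 2 = - (l^-1 * (T - N ^+ 2 / 2)).
  by field.
have -> : s * d - s ^+ 2 * l / 2 = l^-1 * (d ^+ 2 / 2) - l^-1 * ((d - s * l) ^+ 2 / 2).
  by field.
have li_gt0 : 0 < l^-1 by rewrite invr_gt0.
have : 0 <= l^-1 * ((d - s * l) ^+ 2 / 2) by rewrite mulr_ge0 ?divr_ge0 ?sqr_ge0 ?ltW.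
have : l^-1 * (d ^+ 2 / 2) <= l^-1 * (T - N ^+ 2 / 2) by rewrite ler_pM2l.
lra.
Qed.

Section BlockDescent.
Unset Implicit Arguments.
Variables (R : realType) (b : nat) (m n : 'I_b -> nat)
  (nrm : forall i : 'I_b, 'M[R]_(m i, n i) -> R)
  (sharp : forall i : 'I_b, 'M[R]_(m i, n i) -> 'M[R]_(m i, n i))
  (f : pt R m n -> R) (g : pt R m n -> pt R m n) (fstar : R)
  (D : {ffun {set 'I_b} -> R}) (L0 L1 : 'I_b -> {set 'I_b} -> R).
Hypotheses (nrm_norm : forall i, is_norm (nrm i))
  (f_ge : forall X, fstar <= f X)
  (L_ge0 : forall i S, 0 < D S -> 0 <= L0 i S /\ 0 <= L1 i S)
  (f_smooth : forall S, 0 < D S -> forall (X Gam : pt R m n),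
     (forall i, i \notin S -> Gam i = 0) ->
     f (padd X Gam) - f X - pip (g X) Gam <=
       \sum_(i in S) (L0 i S + L1 i S * dualn (nrm i) (g X i)) / 2
                       * nrm i (Gam i) ^+ 2)
  (sharp_max : forall i G Z, tip G Z - nrm i Z ^+ 2 / 2
                 <= tip G (sharp i G) - nrm i (sharp i G) ^+ 2 / 2).
Set Implicit Arguments.

Local Notation step := (step nrm sharp g L0 L1).
Let d X i := dualn (nrm i) (g X i).
Let curv S X i := L0 i S + L1 i S * d X i.
Let sh X i := sharp i (g X i).

Lemma d_ge0 X i : 0 <= d X i.
Proof. exact: (dualn_ge0 (nrm_norm i) (sharp_max i (g X i))). Qed.

Lemma d_sqr_le X i : d X i ^+ 2 / 2 <= tip (g X i) (sh X i) - nrm i (sh X i) ^+ 2 / 2.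
Proof. exact: (dualn_sqr_le (nrm_norm i) (sharp_max i (g X i))). Qed.

Lemma curv_ge0 S X i : 0 < D S -> 0 <= curv S X i.
Proof.
by move=> DS; have [L0_ge0 L1_ge0] := L_ge0 i S DS; rewrite addr_ge0 ?mulr_ge0 ?d_ge0.
Qed.

Definition block_sharp (S : {set 'I_b}) (c : 'I_b -> R) X : pt R m n :=
  fun i => if i \in S then c i *: sh X i else 0.

Lemma smooth_block S c X : 0 < D S ->
  f (padd X (block_sharp S c X)) - f X <=
  \sum_(i in S) (c i * tip (g X i) (sh X i)
                 + curv S X i / 2 * c i ^+ 2 * nrm i (sh X i) ^+ 2).
Proof.
move=> DS.
have supp : forall i, i \notin S -> block_sharp S c X i = 0.
  by move=> i /negbTE iS; rewrite /block_sharp iS.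
have pipE : pip (g X) (block_sharp S c X) = \sum_(i in S) c i * tip (g X i) (sh X i).
  rewrite /pip [RHS]big_mkcond; apply: eq_bigr => i _; rewrite /block_sharp.
  by case: ifP; rewrite ?tipZr ?tip0r.
have normE : \sum_(i in S) (L0 i S + L1 i S * dualn (nrm i) (g X i)) / 2
                               * nrm i (block_sharp S c X i) ^+ 2
             = \sum_(i in S) curv S X i / 2 * c i ^+ 2 * nrm i (sh X i) ^+ 2.
  apply: eq_bigr => i iS; have [_ _ NZ _] := nrm_norm i.
  by rewrite /block_sharp iS NZ exprMn real_normK ?num_real // mulrA.
have := f_smooth S DS X _ supp; rewrite pipE normE big_split /=.
lra.
Qed.

Lemma dualn_grad_eq0 S X i : 0 < D S -> i \in S -> curv S X i = 0 -> d X i = 0.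
Proof.
move=> DS iS curv0; apply/eqP; apply: contraT => d_neq0.
have d_gt0 : 0 < d X i by rewrite lt_def d_neq0 d_ge0.
set T := tip (g X i) (sh X i).
have T_gt0 : 0 < T.
  have := d_sqr_le X i; have := sqr_ge0 (nrm i (sh X i)); rewrite -/T.
  have : 0 < d X i ^+ 2 by rewrite exprn_gt0.
  lra.
(* Moving far enough along the sharp direction of block i costs no curvature,
   so f would drop below fstar. *)
pose t := (f X - fstar + 1) / T.
have := smooth_block (fun j => if j == i then - t else 0) X DS.
rewrite (bigD1 i) //= eqxx curv0 big1 => [|j /andP[_ /negbTE ->]]; last first.
  by rewrite !mul0r expr0n /= !mulr0 mul0r addr0.
have : t * T = f X - fstar + 1 by rewrite divfK // gt_eqF.
have := f_ge (padd X (block_sharp S (fun j => if j == i then - t else 0) X)).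
rewrite !mul0r addr0 mulNr; lra.
Qed.

Lemma step_descent S X (s : 'I_b -> R) : 0 < D S ->
  f (step S X) - f X <= - \sum_(i in S) (s i * d X i - s i ^+ 2 * curv S X i / 2).
Proof.
move=> DS.
have -> : step S X = padd X (block_sharp S (fun i => - (curv S X i)^-1) X).
  apply: functional_extensionality_dep => i; rewrite /padd /step /block_sharp.
  by case: ifP; rewrite ?scaleNr ?addr0.
apply: le_trans (smooth_block _ _ DS) _; rewrite -sumrN; apply: ler_sum => i iS.
have [curv0|curv_neq0] := eqVneq (curv S X i) 0.
  (* The step size is then 0^-1 = 0, harmless since the block gradient vanishes. *)
  rewrite curv0 (dualn_grad_eq0 DS iS curv0) invr0 oppr0 !mul0r !mulr0 addr0.
  by rewrite mul0r subrr oppr0.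
apply: inv_curv_step_le; last exact: d_sqr_le.
by rewrite lt_def curv_neq0 curv_ge0.
Qed.

Hypotheses (D_distr : is_distr D) (prob_gt0 : forall i, 0 < prob_in D i).

Lemma sum_cond_exp (L : 'I_b -> {set 'I_b} -> R) (i : 'I_b) :
  \sum_(S : {set 'I_b} | i \in S) D S * L i S = prob_in D i * cond_exp D L i.
Proof. by rewrite /cond_exp mulrC divfK // gt_eqF. Qed.

Lemma mean_step_descent X (s : 'I_b -> R) :
  \sum_S D S * f (step S X) <=
  f X - \sum_i ((s i - s i ^+ 2 / 2 * cond_exp D L1 i) * prob_in D i * d X i
                - s i ^+ 2 / 2 * (prob_in D i * cond_exp D L0 i)).
Proof.
have [D_ge0 D_sum1] := D_distr.
have -> : \sum_i ((s i - s i ^+ 2 / 2 * cond_exp D L1 i) * prob_in D i * d X i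
                  - s i ^+ 2 / 2 * (prob_in D i * cond_exp D L0 i))
        = \sum_S D S * \sum_(i in S) (s i * d X i - s i ^+ 2 * curv S X i / 2).
  under [RHS]eq_bigr do rewrite mulr_sumr big_mkcond /=.
  rewrite exchange_big /=; apply: eq_bigr => i _.
  rewrite -big_mkcond /=.
  have -> : forall c1 c0 : R, (s i - s i ^+ 2 / 2 * c1) * prob_in D i * d X i
                             - s i ^+ 2 / 2 * (prob_in D i * c0)
        = s i * d X i * prob_in D i - s i ^+ 2 / 2 * d X i * (prob_in D i * c1)
          - s i ^+ 2 / 2 * (prob_in D i * c0) by move=> *; ring.
  rewrite -!sum_cond_exp /prob_in !mulr_sumr -!sumrB.
  by apply: eq_bigr => S _; rewrite /curv; ring.
have fXE : f X = \sum_S D S * f X by rewrite -mulr_suml D_sum1 mul1r.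
rewrite {1}fXE -sumrB.
apply: ler_sum => S _; rewrite -mulrBr.
have := D_ge0 S; rewrite le_eqVlt => /predU1P[<-|DS]; first by rewrite !mul0r.
by rewrite ler_pM2l //; have := step_descent X s DS; lra.
Qed.

Hypothesis cond_L1_gt0 : forall i, 0 < cond_exp D L1 i.

Lemma exp_gradnormE X0 k i :
  exp_gradnorm nrm sharp g L0 L1 D X0 k i = expect_iter D step k X0 (d^~ i).
Proof. by []. Qed.

Lemma sum_expect_descent (theta : R) X0 K :
  \sum_(k < K) (theta * (1 - theta / 2)
                  * \sum_i prob_in D i / cond_exp D L1 i
                           * exp_gradnorm nrm sharp g L0 L1 D X0 k i
                - theta ^+ 2 / 2
                  * \sum_i prob_in D i * cond_exp D L0 i / cond_exp D L1 i ^+ 2)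
  <= f X0 - fstar.
Proof.
have [D_ge0 D_sum1] := D_distr.
pose A := \sum_i prob_in D i * cond_exp D L0 i / cond_exp D L1 i ^+ 2.
pose h X := theta * (1 - theta / 2) * \sum_i prob_in D i / cond_exp D L1 i * d X i
            - theta ^+ 2 / 2 * A.
have mean_h X : \sum_S D S * f (step S X) <= f X - h X.
  apply: le_trans (mean_step_descent X (fun i => theta / cond_exp D L1 i)) _.
  rewrite lerD2l lerN2 /h mulr_sumr /A mulr_sumr -sumrB le_eqVlt.
  apply/predU1P; left; apply: eq_bigr => i _.
  by have := cond_L1_gt0 i; rewrite lt_def => /andP[c_neq0 _]; field.
under eq_bigr => k _.
  have -> : theta * (1 - theta / 2) * \sum_i prob_in D i / cond_exp D L1 i
                                        * exp_gradnorm nrm sharp g L0 L1 D X0 k i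
            - theta ^+ 2 / 2 * A = expect_iter D step k X0 h.
    rewrite expect_iterB expect_iterZ expect_iter_sum (expect_iter_cst step D_sum1).
    by under [in RHS]eq_bigr do rewrite expect_iterZ -exp_gradnormE.
  over.
apply: le_trans (expect_iter_telescope D_ge0 K X0 mean_h) _.
rewrite lerD2l lerN2 -{1}(expect_iter_cst step D_sum1 K X0 fstar).
exact: ler_expect_iter.
Qed.

End BlockDescent.

Lemma cond_exp_ge0 (R : realType) b (D : {ffun {set 'I_b} -> R}) L i :
  (forall S, 0 <= D S) -> (forall S, 0 < D S -> 0 <= L i S) -> 0 <= cond_exp D L i.
Proof.
move=> D_ge0 L_ge0; rewrite /cond_exp divr_ge0 ?sumr_ge0 // => S _.
by have := D_ge0 S; rewrite le_eqVlt => /predU1P[<-|DS]; rewrite ?mul0r ?mulr_ge0 ?L_ge0.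
Qed.

Lemma ceil_ge_absz (R : archiRealFieldType) (x : R) : 0 <= x -> x <= `|Num.ceil x|%N%:R.
Proof.
move=> x_ge0; rewrite natr_absz ger0_norm ?ceil_ge //.
by rewrite ceil_ge0 (lt_le_trans _ x_ge0) ?ltrN10.
Qed.

Lemma exists_le_of_sum_descent (R : archiRealFieldType) K (G : 'I_K -> R)
    (u A delta : R) :
  let theta := u / (u + A) in
  (0 < K)%N -> 0 < u -> 0 <= A -> 0 <= delta ->
  K = `|Num.ceil (2 * delta * A / u ^+ 2 + 2 * delta / u)|%N ->
  \sum_(k < K) (theta * (1 - theta / 2) * G k - theta ^+ 2 / 2 * A) <= delta ->
  exists k, G k <= u.
Proof.
move=> theta K_gt0 u_gt0 A_ge0 delta_ge0 K_def sum_le.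
have uA_gt0 : 0 < u + A by rewrite ltr_wpDr.
have theta_gt0 : 0 < theta by rewrite divr_gt0.
have theta_le1 : theta <= 1 by rewrite ler_pdivrMr // mul1r lerDl.
have rate_gt0 : 0 < theta * (1 - theta / 2) by rewrite mulr_gt0 //; lra.
(* theta = u / (u + A) maximizes the guaranteed per-step decrease. *)
have decrease :
    theta * (1 - theta / 2) * u - theta ^+ 2 / 2 * A = u ^+ 2 / (2 * (u + A)).
  by rewrite /theta; field; rewrite gt_eqF.
have decrease_gt0 : 0 < u ^+ 2 / (2 * (u + A)) by rewrite divr_gt0 ?exprn_gt0 ?mulr_gt0.
have K_ge : 2 * delta * A / u ^+ 2 + 2 * delta / u <= K%:R.
  by rewrite K_def ceil_ge_absz // addr_ge0 // divr_ge0 ?mulr_ge0 ?(ltW u_gt0).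
have delta_le : delta <= K%:R * (theta * (1 - theta / 2) * u - theta ^+ 2 / 2 * A).
  have bound_mul : (2 * delta * A / u ^+ 2 + 2 * delta / u) * (u ^+ 2 / (2 * (u + A)))
                   = delta by field; rewrite ?gt_eqF.
  by rewrite decrease -[X in X <= _]bound_mul ler_wpM2r // ltW.
have [k] := exists_le_of_sum_le K_gt0 sum_le delta_le.
by rewrite lerD2r ler_pM2l //; exists k.
Qed.

Theorem theorem6 (R : realType) (b : nat) (m n : 'I_b -> nat)
  (nrm : forall i : 'I_b, 'M[R]_(m i, n i) -> R)
  (sharp : forall i : 'I_b, 'M[R]_(m i, n i) -> 'M[R]_(m i, n i))
  (f : pt R m n -> R) (g : pt R m n -> pt R m n) (fstar : R)
  (D : {ffun {set 'I_b} -> R}) (L0 L1 : 'I_b -> {set 'I_b} -> R)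
  (X0 : pt R m n) (eps : R) :
  (0 < b)%N ->
  (forall i, is_norm (nrm i)) ->
  is_C1_with_grad f g ->
  (forall X, fstar <= f X) ->
  is_distr D ->
  (forall i S, 0 < D S -> 0 <= L0 i S /\ 0 <= L1 i S) ->
  (forall S, 0 < D S -> forall (X Gam : pt R m n),
     (forall i, i \notin S -> Gam i = 0) ->
     f (padd X Gam) - f X - pip (g X) Gam <=
       \sum_(i in S) (L0 i S + L1 i S * dualn (nrm i) (g X i)) / 2
                       * nrm i (Gam i) ^+ 2) ->
  (forall i G Z, tip G Z - nrm i Z ^+ 2 / 2
                 <= tip G (sharp i G) - nrm i (sharp i G) ^+ 2 / 2) ->
  (forall i, 0 < prob_in D i) ->
  (forall i, 0 < cond_exp D L1 i) ->
  0 < eps ->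
  let delta0 := f X0 - fstar in
  let w := fun i => prob_in D i / cond_exp D L1 i in
  let wbar := (\sum_(l < b) w l) / b%:R in
  let bound :=
    2 * delta0 * (\sum_(i < b) prob_in D i * cond_exp D L0 i
                                 / cond_exp D L1 i ^+ 2)
      / (eps ^+ 2 * wbar ^+ 2)
    + 2 * delta0 / (eps * wbar) in
  forall K : nat, K = `|Num.ceil bound|%N -> (0 < K)%N ->
  exists k : 'I_K,
    \sum_(i < b) w i / wbar * exp_gradnorm nrm sharp g L0 L1 D X0 k i <= eps.
Proof.
move=> b_gt0 nrm_norm _ f_ge D_distr L_ge0 f_smooth sharp_max prob_gt0 cond_L1_gt0
  eps_gt0 delta0 w wbar bound K K_def K_gt0.
pose A := \sum_(i < b) prob_in D i * cond_exp D L0 i / cond_exp D L1 i ^+ 2.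
have A_ge0 : 0 <= A.
  apply: sumr_ge0 => i _; apply: divr_ge0; last exact/exprn_ge0/ltW.
  apply: mulr_ge0; first exact: ltW.
  exact: cond_exp_ge0 (proj1 D_distr) (fun S DS => proj1 (L_ge0 i S DS)).
have w_gt0 i : 0 < w i := divr_gt0 (prob_gt0 i) (cond_L1_gt0 i).
have wbar_gt0 : 0 < wbar.
  rewrite divr_gt0 ?ltr0n // (bigD1 (Ordinal b_gt0)) //= ltr_pwDl ?w_gt0 //.
  by rewrite sumr_ge0 // => i _; exact/ltW/w_gt0.
have u_gt0 : 0 < eps * wbar by rewrite mulr_gt0.
have delta0_ge0 : 0 <= delta0 by rewrite subr_ge0.
have bound_eq : bound = 2 * delta0 * A / (eps * wbar) ^+ 2 + 2 * delta0 / (eps * wbar).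
  by rewrite exprMn.
rewrite bound_eq in K_def.
have [k Gk_le] := exists_le_of_sum_descent K_gt0 u_gt0 A_ge0 delta0_ge0 K_def
  (sum_expect_descent nrm_norm f_ge L_ge0 f_smooth sharp_max D_distr prob_gt0
                      cond_L1_gt0 _ X0 K).
exists k; under eq_bigr do rewrite mulrAC.
by rewrite -mulr_suml ler_pdivrMr.
Qed.
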